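(* Let $P=\operatorname{conv}(W(\Lambda))$ be a full-dimensional non-degenerate $W$-symmetric polytope, $K\subseteq S$, and $\mathbb{F}$ a field. Write the Stanley–Reisner ring of $P/W_K=P\cap C_K$ as $\mathcal{SR}(P/W_K)=\mathbb{F}[X_{F,e},Y_k: F\in\mathcal{F}_K, k\in K]/I_K$, where $X_{F,e}$ corresponds to the facet $F\cap C_K$ and $Y_k$ to the facet $H_k\cap P$. Then the ideal $I_K$ is generated by the monomials of the following two types: (i) $X_{F_1,e}X_{F_2,e}\cdots X_{F_p,e}$ with $F_1\cap F_2\cap\cdots\cap F_p=\emptyset$; (ii) $X_{F,e}Y_k$ with $F\cap H_k=\emptyset$.
   Context: $V$ is a real Euclidean space of dimension $n$, $R$ a reduced root system spanning $V$ with simple system $S=\{\alpha_1,\dots,\alpha_n\}$ identified with $\{1,\dots,n\}$; $H_k$ is the hyperplane orthogonal to $\alpha_k$; $W$ is the Weyl group, $W_K$ the subgroup generated by the reflections in $\alpha_k$, $k\in K$. $C_K=\{x:\langle x,\alpha_k\rangle\ge0\ \forall k\in K\}$, $\Lambda\subset C_S$ finite, non-degenerate means no vertex of $P$ lies on the boundary of $C_S$. $\mathcal{F}_K$ is the set of facets of $P$ whose barycenters lie in $C_K$; the facets of $P\cap C_K$ are exactly the $F\cap C_K$ ($F\in\mathcal{F}_K$) and the $H_k\cap P$ ($k\in K$). The Stanley–Reisner ring of a polytope $Q$ over $\mathbb{F}$ is $\mathbb{F}[X_G: G \text{ facet of } Q]/I$ where $I$ is generated by all monomials $X_{G_1}\cdots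 X_{G_p}$ with $G_1\cap\cdots\cap G_p=\emptyset$; thus $I_K$ is generated by the monomials $X_{F_1,e}\cdots X_{F_p,e}Y_{k_1}\cdots Y_{k_q}$ whose corresponding facets of $P\cap C_K$ have empty intersection. *)

From mathcomp Require Import all_boot all_order all_algebra.
From mathcomp Require Import mpoly.
From mathcomp Require Import reals.
Set Implicit Arguments. Unset Strict Implicit. Unset Printing Implicit Defensive.
Import GRing.Theory Num.Theory.
Local Open Scope ring_scope.

Section Geometry.
Variables (R : realType) (n : nat).
Notation V := 'rV[R]_n.

Definition dot (u v : V) : R := (u *m v^T) 0 0.

Definition refl (a x : V) : V := x - ((2 * dot x a) / dot a a) *: a.

Definition reduced_root_system (Rt : seq V) : Prop :=
  [/\ uniq Rt, 0 \notin Rt &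
      (forall v : V, exists c : 'I_(size Rt) -> R,
          v = \sum_(i < size Rt) c i *: Rt`_i)] /\
  [/\ (forall a b, a \in Rt -> b \in Rt -> refl a b \in Rt),
      (forall u w, u \in Rt -> w \in Rt -> (2 * dot w u) / dot u u \is a Num.int)
    & (forall a (c : R), a \in Rt -> c *: a \in Rt -> c = 1 \/ c = -1)].

Definition simple_system (Rt : seq V) (alpha : 'I_n -> V) : Prop :=
  [/\ (forall k, alpha k \in Rt),
      (forall c : 'I_n -> R, \sum_k c k *: alpha k = 0 -> forall k, c k = 0)
    & (forall b, b \in Rt -> exists c : 'I_n -> R,
          b = \sum_k c k *: alpha k /\
          ((forall k, c k \is a Num.nat) \/ (forall k, - c k \is a Num.nat)))].

(* the W-orbit W(Lambda): images of points of Lambda under finite products of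
   reflections s_a, a in Rt (these generate the Weyl group W) *)
Definition Worbit (Rt : seq V) (Lam : seq V) (x : V) : Prop :=
  exists (l : seq V) (lam : V),
    [/\ all (fun a => a \in Rt) l, lam \in Lam & x = foldr refl lam l].

Definition conv (A : V -> Prop) (x : V) : Prop :=
  exists (m : nat) (p : 'I_m -> V) (w : 'I_m -> R),
    [/\ (forall i, A (p i)), (forall i, 0 <= w i), \sum_i w i = 1
      & x = \sum_i w i *: p i].

Definition cone (alpha : 'I_n -> V) (K : {set 'I_n}) (x : V) : Prop :=
  forall k, k \in K -> 0 <= dot x (alpha k).

Definition wall (alpha : 'I_n -> V) (k : 'I_n) (x : V) : Prop :=
  dot x (alpha k) = 0.

Definition aff_dim_ge (A : V -> Prop) (d : nat) : Prop :=
  exists (x0 : V) (p : 'I_d -> V),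
    [/\ A x0, (forall i, A (p i))
      & forall c : 'I_d -> R, \sum_i c i *: (p i - x0) = 0 -> forall i, c i = 0].

Definition full_dimensional (P : V -> Prop) : Prop := aff_dim_ge P n.

Definition face (P F : V -> Prop) : Prop :=
  exists (a : V) (b : R),
    [/\ a != 0, (forall x, P x -> dot a x <= b)
      & forall x, F x <-> (P x /\ dot a x = b)].

Definition facet (P F : V -> Prop) : Prop := face P F /\ aff_dim_ge F n.-1.

Definition vertex (P : V -> Prop) (v : V) : Prop := face P (fun x => x = v).

Definition nondeg_polytope (alpha : 'I_n -> V) (P : V -> Prop) : Prop :=
  forall v, vertex P v ->
    ~ (cone alpha setT v /\ exists k, dot v (alpha k) = 0).

Definition barycenter (P F : V -> Prop) (b : V) : Prop :=
  exists s : seq V,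
    [/\ uniq s, (forall x, x \in s <-> (vertex P x /\ F x))
      & b = (size s)%:R^-1 *: \sum_(x <- s) x].

Definition facets_K (alpha : 'I_n -> V) (P : V -> Prop) (K : {set 'I_n})
  (F : V -> Prop) : Prop :=
  facet P F /\ exists b, barycenter P F b /\ cone alpha K b.

End Geometry.

Definition gen_ideal (T : comRingType) (G : T -> Prop) (p : T) : Prop :=
  exists s : seq (T * T), (forall c, c \in s -> G c.2) /\
    p = \sum_(c <- s) c.1 * c.2.

From HB Require Import structures.
From mathcomp Require Import all_boot all_order all_algebra.
From mathcomp Require Import mpoly.
From mathcomp Require Import reals.
From mathcomp Require Import boolp.
From mathcomp Require Import ring lra.
Import Order.TTheory GRing.Theory Num.Theory.
Local Open Scope ring_scope.
Set Implicit Arguments. Unset Strict Implicit. Unset Printing Implicit Defensive.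

(* Monomials of type (i) and (ii) are Stanley-Reisner generators, so the point
   is the converse: if the facets F_i (i in A) meet, and each of them meets
   every wall H_k (k in B), then they meet in C_K /\ H_B.
   By non-degeneracy no vertex of P lies on a root hyperplane.  Comparing a
   vertex v of a face with its mirror image s_k v shows that the outer normal
   u of F in F_K has <u, alpha_k> >= 0 for k in K (otherwise all vertices of
   F, hence its barycenter, would lie strictly below H_k), and <u, alpha_k> = 0
   as soon as F meets H_k.  The first fact provides an orbit point p of the
   face G = /\ F_i lying in C_K (maximize <rho, .> where <rho, alpha_k> = 1);
   the second makes G stable under W_B, so the barycenter x of the W_B-orbit
   of p lies in G /\ H_B.  Finally x - p = sum_(k in B) t_k alpha_k with all
   t_k <= 0 because distinct simple roots form obtuse angles, and this keeps
   x in C_K. *)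

Lemma small_pos_scale (R : realFieldType) (T : eqType) (s : seq T) (f g : T -> R) :
  (forall z, z \in s -> 0 < g z) ->
  exists2 e, 0 < e & forall z, z \in s -> e * f z < g z.
Proof.
elim: s => [|q0 s IH] g_gt0; first by exists 1.
have [e e_gt0 He] := IH (fun z zs => g_gt0 z (mem_behead (s := q0 :: s) zs)).
have g0_gt0 := g_gt0 q0 (mem_head _ _).
have den_gt0 : 0 < 1 + `|f q0| by rewrite ltr_pwDl.
pose e0 := g q0 / (1 + `|f q0|).
have e0_gt0 : 0 < e0 by rewrite divr_gt0.
exists (Num.min e e0); first by rewrite lt_min e_gt0.
have min_gt0 : 0 < Num.min e e0 by rewrite lt_min e_gt0.
move=> z; rewrite inE => /predU1P[->|zs].
  apply: (le_lt_trans (y := e0 * `|f q0|)).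
    apply: le_trans (ler_wpM2l (ltW min_gt0) (ler_norm _)) _.
    by rewrite ler_wpM2r // ge_min lexx orbT.
  by rewrite /e0 mulrAC ltr_pdivrMr // ltr_pM2l // ltrDr.
have [fz_le0|fz_gt0] := lerP (f z) 0.
  by apply: le_lt_trans (g_gt0 z (mem_behead (s := q0 :: s) zs)); rewrite pmulr_rle0.
by apply: le_lt_trans (He z zs); rewrite ler_pM2r // ge_min lexx.
Qed.

Section Euclidean.
Variables (R : realType) (n : nat).
Notation V := 'rV[R]_n.
Implicit Types (a p q u v x y : V).

Lemma dotE u v : dot u v = \sum_j u 0 j * v 0 j.
Proof. by rewrite /dot mxE; apply: eq_bigr => j _; rewrite mxE. Qed.

Lemma dotC u v : dot u v = dot v u.
Proof. by rewrite !dotE; apply: eq_bigr => j _; rewrite mulrC. Qed.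

Lemma dotDl u v x : dot (u + v) x = dot u x + dot v x.
Proof. by rewrite !dotE -big_split; apply: eq_bigr => j _; rewrite mxE mulrDl. Qed.

Lemma dotZl c u x : dot (c *: u) x = c * dot u x.
Proof. by rewrite !dotE mulr_sumr; apply: eq_bigr => j _; rewrite mxE mulrA. Qed.

Lemma dotBl u v x : dot (u - v) x = dot u x - dot v x.
Proof. by rewrite dotDl -scaleN1r dotZl mulN1r. Qed.

Lemma dot0l x : dot 0 x = 0.
Proof. by rewrite -(scale0r (0 : V)) dotZl mul0r. Qed.

Lemma dotDr u v x : dot x (u + v) = dot x u + dot x v.
Proof. by rewrite dotC dotDl !(dotC x). Qed.

Lemma dotZr c u x : dot x (c *: u) = c * dot x u.
Proof. by rewrite dotC dotZl dotC. Qed.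

Lemma dotBr u v x : dot x (u - v) = dot x u - dot x v.
Proof. by rewrite dotC dotBl !(dotC x). Qed.

Lemma dot0r x : dot x 0 = 0.
Proof. by rewrite dotC dot0l. Qed.

Lemma dot_suml (I : Type) (r : seq I) (P : pred I) (F : I -> V) x :
  dot (\sum_(i <- r | P i) F i) x = \sum_(i <- r | P i) dot (F i) x.
Proof. by elim/big_rec2: _ => [|i y1 y2 _ <-]; rewrite ?dot0l ?dotDl. Qed.

Lemma dot_sumr (I : Type) (r : seq I) (P : pred I) (F : I -> V) x :
  dot x (\sum_(i <- r | P i) F i) = \sum_(i <- r | P i) dot x (F i).
Proof. by elim/big_rec2: _ => [|i y1 y2 _ <-]; rewrite ?dot0r ?dotDr. Qed.

Lemma dot_ge0 u : 0 <= dot u u.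
Proof. by rewrite dotE sumr_ge0 // => j _; rewrite -expr2 sqr_ge0. Qed.

Lemma dot_eq0 u : (dot u u == 0) = (u == 0).
Proof.
apply/idP/eqP => [|->]; last by rewrite dot0l.
rewrite dotE psumr_eq0 => [/allP u0|j _]; last by rewrite -expr2 sqr_ge0.
apply/rowP => j; have := u0 j (mem_index_enum j).
by rewrite mulf_eq0 orbb mxE => /eqP.
Qed.

Lemma dot_gt0 u : u != 0 -> 0 < dot u u.
Proof. by move=> u0; rewrite lt_def dot_ge0 dot_eq0 u0. Qed.

Lemma dot_le_self p q : dot q q <= dot p p -> dot p q <= dot p p.
Proof.
have := dot_ge0 (p - q); rewrite !dotBl !dotBr (dotC q p); lra.
Qed.

Lemma dot_self_eq p q : dot q q <= dot p p -> dot p q = dot p p -> q = p.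
Proof.
move=> qp pq; apply/eqP; rewrite eq_sym -subr_eq0 -dot_eq0 eq_le dot_ge0 andbT.
rewrite !dotBl !dotBr (dotC q p); lra.
Qed.

Lemma refl_is_linear a : linear (refl a).
Proof.
move=> c x y; rewrite /refl dotDl dotZl scalerBr scalerA mulrDr mulrDl scalerDl.
by rewrite opprD addrACA mulrCA !mulrA.
Qed.

HB.instance Definition _ a :=
  GRing.isLinear.Build R V V *:%R (refl a) (refl_is_linear a).

Lemma dot_reflr u a x : dot u (refl a x) = dot u x - 2 * dot x a / dot a a * dot u a.
Proof. by rewrite /refl dotBr dotZr. Qed.

Lemma dot_reflC a x y : dot (refl a x) y = dot x (refl a y).
Proof. by rewrite dotC !dot_reflr (dotC y x); ring. Qed.

Lemma refl_id a x : dot x a = 0 -> refl a x = x.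
Proof. by move=> xa; rewrite /refl xa mulr0 mul0r scale0r subr0. Qed.

Lemma refl_self a : a != 0 -> refl a a = - a.
Proof.
move=> a0; rewrite /refl -mulrA mulfV ?dot_eq0 // mulr1 scaler_nat mulr2n.
by rewrite opprD addNKr.
Qed.

Lemma dot_refl_self a x : a != 0 -> dot (refl a x) a = - dot x a.
Proof. by move=> a0; rewrite dot_reflC refl_self // -scaleN1r dotZr mulN1r. Qed.

Lemma reflK a : a != 0 -> involutive (refl a).
Proof.
move=> a0 x; rewrite [refl a x in LHS]/refl linearB linearZ /= refl_self //.
by rewrite scalerN opprK /refl subrK.
Qed.

Lemma dot_comb_tight m (p : 'I_m -> V) (w : 'I_m -> R) a b :
  (forall i, 0 <= w i) -> \sum_i w i = 1 -> (forall i, dot a (p i) <= b) ->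
  dot a (\sum_i w i *: p i) = b -> forall i, 0 < w i -> dot a (p i) = b.
Proof.
move=> w_ge0 w1 pb ab i wi_gt0.
have : \sum_j w j * (b - dot a (p j)) = 0.
  under eq_bigr do rewrite mulrBr.
  rewrite sumrB -mulr_suml w1 mul1r -ab dot_sumr.
  by under eq_bigr do rewrite dotZr; rewrite subrr.
have gap_ge0 j : 0 <= w j * (b - dot a (p j)) by rewrite mulr_ge0 ?subr_ge0.
move=> /(psumr_eq0P (fun j _ => gap_ge0 j)) /(_ i isT) /eqP.
by rewrite mulf_eq0 gt_eqF //= subr_eq0 => /eqP.
Qed.

Section Convex.
Variable A : V -> Prop.

Lemma conv_mem x : A x -> conv A x.
Proof.
by exists 1%N, (fun=> x), (fun=> 1); split; rewrite ?big_ord1 ?scale1r.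
Qed.

Lemma conv_avg s : s != [::] -> (forall x, x \in s -> A x) ->
  conv A ((size s)%:R^-1 *: \sum_(x <- s) x).
Proof.
move=> s_neq0 sA; exists (size s), (fun i => s`_i), (fun=> (size s)%:R^-1).
split=> [i|i||].
- exact/sA/mem_nth.
- by rewrite invr_ge0 ler0n.
- by rewrite sumr_const card_ord -[LHS]mulr_natr mulVf // pnatr_eq0 size_eq0.
- by rewrite scaler_sumr (big_nth 0) big_mkord.
Qed.

Lemma conv_linear (f : {linear V -> V}) x :
  (forall q, A q -> A (f q)) -> conv A x -> conv A (f x).
Proof.
move=> fA [m [p [w [Ap w_ge0 w1 ->]]]]; exists m, (f \o p), w; split=> //.
  by move=> i; apply: fA.
by rewrite linear_sum; apply: eq_bigr => i _; rewrite linearZ.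
Qed.

Lemma conv_le a b x : (forall q, A q -> dot a q <= b) -> conv A x -> dot a x <= b.
Proof.
move=> Hq [m [p [w [Ap w_ge0 w1 ->]]]].
rewrite dot_sumr -[b]mul1r -w1 mulr_suml; apply: ler_sum => i _.
by rewrite dotZr ler_wpM2l ?Hq.
Qed.

Lemma conv_tight (I : finType) (J : pred I) (u : I -> V) (c : I -> R) x :
  (forall i q, J i -> A q -> dot (u i) q <= c i) -> conv A x ->
  (forall i, J i -> dot (u i) x = c i) ->
  exists2 q, A q & forall i, J i -> dot (u i) q = c i.
Proof.
move=> Hle [m [p [w [Ap w_ge0 w1 ->]]]] Hx.
have [j /andP[_ wj_gt0]] : exists j, true && (0 < w j).
  by apply: psumr_neq0P => [j _|]; rewrite ?w1 //; apply/eqP/oner_neq0.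
exists (p j) => // i Ji.
by apply: (dot_comb_tight w_ge0 w1 _ (Hx i Ji)) => // k; apply: Hle.
Qed.

Lemma conv_max_unique a b p x :
  (forall q, A q -> dot a q <= b /\ (dot a q = b -> q = p)) -> conv A x ->
  dot a x = b -> x = p.
Proof.
move=> Hq [m [y [w [Ay w_ge0 w1 ->]]]] ab.
rewrite -[p]scale1r -w1 scaler_suml; apply: eq_bigr => i _.
have [wi0|wi_neq0] := eqVneq (w i) 0; first by rewrite wi0 !scale0r.
have wi_gt0 : 0 < w i by rewrite lt_def wi_neq0 w_ge0.
congr (_ *: _); apply: (Hq _ (Ay i)).2.
by apply: (dot_comb_tight w_ge0 w1 _ ab) => // k; apply: (Hq _ (Ay k)).1.
Qed.

End Convex.

End Euclidean.

Section RootSystem.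
Variables (R : realType) (n : nat).
Notation V := 'rV[R]_n.
Implicit Types (a p q u v x y : V).
Variables (Rt : seq V) (alpha : 'I_n -> V).
Hypothesis HR : reduced_root_system Rt.
Hypothesis HS : simple_system Rt alpha.

Lemma root_neq0 a : a \in Rt -> a != 0.
Proof. by case: HR => -[_ Rt0 _] _ aR; apply: contraNneq Rt0 => <-. Qed.

Lemma refl_root_mem a (b : V) : a \in Rt -> b \in Rt -> refl a b \in Rt.
Proof. by case: HR => _ [Rt_refl _ _]; apply: Rt_refl. Qed.

Lemma foldr_refl_root l (b : V) : all (mem Rt) l -> b \in Rt -> foldr (@refl R n) b l \in Rt.
Proof. by elim: l => //= a l IH /andP[aR lR] bR; rewrite refl_root_mem ?IH. Qed.

Lemma alpha_root k : alpha k \in Rt.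
Proof. by case: HS. Qed.

Lemma alpha_neq0 k : alpha k != 0.
Proof. exact/root_neq0/alpha_root. Qed.

Lemma root_coef_sign (b : V) : b \in Rt -> exists c : 'I_n -> R,
  (forall k, 0 <= c k) /\ (b = \sum_k c k *: alpha k \/ b = - \sum_k c k *: alpha k).
Proof.
case: HS => _ _ /[apply] -[c [-> [c_nat|c_nat]]].
  by exists c; split=> [k|]; [exact: natr_ge0 | left].
exists (fun k => - c k); split=> [k|]; first exact: natr_ge0.
by right; rewrite -sumrN; apply: eq_bigr => k _; rewrite scaleNr opprK.
Qed.

Lemma alpha_coef_eq (c d : 'I_n -> R) :
  \sum_k c k *: alpha k = \sum_k d k *: alpha k -> c =1 d.
Proof.
case: HS => _ Hfree _ cd k; apply/eqP; rewrite -subr_eq0; apply/eqP.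
apply: (Hfree (fun j => c j - d j)); under eq_bigr do rewrite scalerBl.
by rewrite sumrB cd subrr.
Qed.

Lemma alpha_free_in (B : {set 'I_n}) (t : 'I_n -> R) :
  \sum_(k in B) t k *: alpha k = 0 -> forall k, k \in B -> t k = 0.
Proof.
case: HS => _ Hfree _ tB0 k kB.
have : \sum_j (if j \in B then t j else 0) *: alpha j = 0.
  rewrite -[RHS]tB0 [RHS]big_mkcond; apply: eq_bigr => j _.
  by case: ifP; rewrite ?scale0r.
by move/Hfree/(_ k); rewrite kB.
Qed.

Lemma alpha_obtuse j k : j != k -> dot (alpha j) (alpha k) <= 0.
Proof.
move=> jk; have dk := dot_gt0 (alpha_neq0 k).
set s := 2 * dot (alpha j) (alpha k) / dot (alpha k) (alpha k).
suff : s <= 0 by rewrite /s pmulr_lle0 ?invr_gt0 // pmulr_rle0.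
have delta i0 : \sum_i (i == i0)%:R *: alpha i = alpha i0.
  rewrite (bigD1 i0) //= big1 => [|i /negbTE ->]; last by rewrite scale0r.
  by rewrite eqxx scale1r addr0.
pose d i : R := (i == j)%:R - s * (i == k)%:R.
have dE : refl (alpha k) (alpha j) = \sum_i d i *: alpha i.
  under eq_bigr do rewrite /d scalerBl -scalerA.
  by rewrite sumrB -scaler_sumr !delta.
have [c [c_ge0 [cE|cE]]] := root_coef_sign (refl_root_mem (alpha_root k) (alpha_root j)).
  have := alpha_coef_eq (etrans (esym cE) dE) k.
  rewrite /d eqxx eq_sym (negbTE jk) mulr1 sub0r => ck.
  by rewrite -oppr_ge0 -ck.
have : \sum_i c i *: alpha i = \sum_i (- d i) *: alpha i.
  by rewrite -[LHS]opprK -cE dE -sumrN; apply: eq_bigr => i _; rewrite scaleNr.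
move=> /alpha_coef_eq /(_ j); rewrite /d eqxx (negbTE jk) mulr0 subr0 => cj.
by have := c_ge0 j; rewrite cj oppr_ge0 ler10.
Qed.

Lemma alpha_coef_le0 (B : {set 'I_n}) (t : 'I_n -> R) :
  (forall k, k \in B -> dot (\sum_(j in B) t j *: alpha j) (alpha k) <= 0) ->
  forall k, k \in B -> t k <= 0.
Proof.
move=> Ht.
pose tp k := if 0 < t k then t k else 0.
have tp_ge0 k : 0 <= tp k by rewrite /tp; case: ifP => // /ltW.
have tn_ge0 k : 0 <= tp k - t k.
  by rewrite subr_ge0 /tp; case: ifP => // /negbT; rewrite -leNgt.
have tn_eq0 k : 0 < tp k -> tp k - t k = 0.
  by rewrite /tp; case: ifP; rewrite ?ltxx // subrr.
(* With t = tp - tn split into positive and negative parts, y := sum tp alpha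
   has <y, y> <= 0 since tn is supported away from the support of tp. *)
set y := \sum_(j in B) tp j *: alpha j.
have yE : y = \sum_(j in B) t j *: alpha j + \sum_(j in B) (tp j - t j) *: alpha j.
  by rewrite -big_split; apply: eq_bigr => j _ /=; rewrite -scalerDl addrC subrK.
have y_le0 : dot y y <= 0.
  rewrite {1}/y dot_suml; apply: sumr_le0 => k kB; rewrite dotZl.
  have [->|tpk_neq0] := eqVneq (tp k) 0; first by rewrite mul0r.
  have tpk_gt0 : 0 < tp k by rewrite lt_def tpk_neq0 tp_ge0.
  rewrite pmulr_rle0 // dotC yE dotDl.
  have : dot (\sum_(j in B) (tp j - t j) *: alpha j) (alpha k) <= 0.
    rewrite dot_suml; apply: sumr_le0 => j _; rewrite dotZl.
    have [->|jk] := eqVneq j k; first by rewrite tn_eq0 // mul0r.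
    exact: mulr_ge0_le0 (tn_ge0 j) (alpha_obtuse jk).
  have := Ht k kB; lra.
have y0 : y = 0 by apply/eqP; rewrite -dot_eq0 eq_le y_le0 dot_ge0.
move=> k kB; have := alpha_free_in y0 kB; rewrite /tp.
by case: ifP => [_ ->|/negbT]; rewrite // -leNgt.
Qed.

Lemma exists_rho : exists rho, forall k, dot rho (alpha k) = 1.
Proof.
pose M : 'M[R]_n := \matrix_(k, j) alpha k 0 j.
have rowM k : row k M = alpha k by apply/rowP => j; rewrite !mxE.
have M_free (c : 'rV[R]_n) : c *m M = 0 -> c = 0.
  move=> cM; case: HS => _ Hfree _; apply/rowP => k; rewrite mxE.
  apply: (Hfree (fun k => c 0 k)); rewrite -[RHS]cM; apply/rowP => j.
  by rewrite !mxE summxE; apply: eq_bigr => i _; rewrite !mxE.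
have Mu : M \in unitmx.
  rewrite -row_free_unit -kermx_eq0; apply/eqP/row_matrixP => i.
  by rewrite row0; apply: M_free; rewrite -row_mul mulmx_ker row0.
exists (invmx M *m const_mx 1)^T => k.
by rewrite dotC /dot trmxK -rowM -row_mul mulmxA mulmxV // mul1mx !mxE.
Qed.

Variable Lam : seq V.
Notation Orb := (Worbit Rt Lam).
Notation P := (conv Orb).

Lemma Worbit_refl a x : a \in Rt -> Orb x -> Orb (refl a x).
Proof. by move=> aR [l [lam [lR lamL ->]]]; exists (a :: l), lam; rewrite /= aR. Qed.

Lemma conv_Worbit_refl a x : a \in Rt -> P x -> P (refl a x).
Proof. by move=> aR; apply: (conv_linear (f := refl a)) => q; apply: Worbit_refl. Qed.

Lemma foldr_refl_sum l (I : finType) (c : I -> R) (v : I -> V) :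
  foldr (@refl R n) (\sum_i c i *: v i) l = \sum_i c i *: foldr (@refl R n) (v i) l.
Proof.
elim: l => //= a l ->; rewrite linear_sum; apply: eq_bigr => i _.
by rewrite linearZ.
Qed.

Lemma Worbit_finite : exists T : seq V, forall x, Orb x -> x \in T.
Proof.
have [[_ _ /choice[coef Hcoef]] _] := HR.
pose F := {ffun 'I_(size Rt) -> 'I_(size Rt)}.
exists [seq \sum_i coef lam i *: Rt`_(f i) | lam : V <- Lam, f : F <- enum F].
move=> _ [l [lam [lR lamL ->]]].
have idx (i : 'I_(size Rt)) : (index (foldr (@refl R n) (nth 0%R Rt i) l) Rt < size Rt)%N.
  by rewrite index_mem foldr_refl_root // mem_nth.
rewrite {1}(Hcoef lam) foldr_refl_sum.
have -> : \sum_i coef lam i *: foldr (@refl R n) Rt`_i l =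
          \sum_i coef lam i *: Rt`_([ffun i => Ordinal (idx i)] i).
  by apply: eq_bigr => i _; rewrite ffunE /= nth_index // foldr_refl_root // mem_nth.
by apply: allpairs_f => //; rewrite mem_enum.
Qed.

Lemma Worbit_argmax (Q : V -> Prop) (f : V -> R) : (exists2 q, Orb q & Q q) ->
  exists p, [/\ Orb p, Q p & forall q, Orb q -> Q q -> f q <= f p].
Proof.
move=> [q0 Oq0 Qq0]; have [T HT] := Worbit_finite.
have ord_of q : Orb q -> exists i : 'I_(size T), T`_i = q.
  move=> Oq; have qT : (index q T < size T)%N by rewrite index_mem HT.
  by exists (Ordinal qT); rewrite nth_index ?HT.
have [i0 i0E] := ord_of q0 Oq0.
pose good (i : 'I_(size T)) := `[< Orb T`_i /\ Q T`_i >].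
have good_i0 : good i0 by apply/asboolP; rewrite i0E.
case: (arg_maxP (fun i : 'I_(size T) => f T`_i) good_i0) => i /asboolP[Oi Qi] imax.
exists T`_i; split=> // q Oq Qq; have [j jE] := ord_of q Oq.
by rewrite -jE; apply: imax; apply/asboolP; rewrite jE.
Qed.

Lemma vertex_conv v : vertex P v -> P v.
Proof. by move=> [a [b [_ _ /(_ v) [/(_ erefl) []]]]]. Qed.

Lemma vertex_Worbit v : vertex P v -> Orb v.
Proof.
move=> [a [b [_ Hle Hv]]]; have [Pv av] := (Hv v).1 erefl.
have [q Oq aq] := conv_tight (J := predT) (u := fun _ : unit => a) (c := fun=> b)
  (fun _ q _ Oq => Hle q (conv_mem Oq)) Pv (fun _ _ => av).
by rewrite -((Hv q).2 (conj (conv_mem Oq) (aq tt isT))).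
Qed.

Lemma vertex_refl a v : a \in Rt -> vertex P v -> vertex P (refl a v).
Proof.
move=> aR [u [b [u0 Hle Hv]]]; have a0 := root_neq0 aR.
exists (refl a u), b; split.
- by apply: contraNneq u0 => ua0; rewrite -(reflK a0 u) ua0 linear0.
- by move=> x Px; rewrite dot_reflC; apply/Hle/conv_Worbit_refl.
- move=> x; rewrite dot_reflC; split=> [->|[Px ux]].
    by have [Pv uv] := (Hv v).1 erefl; rewrite reflK //; split; first exact: conv_Worbit_refl.
  by rewrite -[x](reflK a0) ((Hv _).2 (conj (conv_Worbit_refl aR Px) ux)).
Qed.

(* If a = 0 then P = {p}, which any nonzero functional exposes; this is where
   n > 0 is needed. *)
Lemma unique_max_vertex a b p : (0 < n)%N -> Orb p -> dot a p = b ->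
  (forall q, Orb q -> dot a q <= b /\ (dot a q = b -> q = p)) -> vertex P p.
Proof.
move=> n_gt0 Op ap Hq.
have P_eq y : P y -> dot a y = b -> y = p by apply: conv_max_unique.
have [a0|a_neq0] := eqVneq a 0; last first.
  exists a, b; split=> // [y Py|y]; first by apply: conv_le Py => q /Hq[].
  by split=> [->|[Py ay]]; [split; first exact: conv_mem | exact: P_eq].
have P_p y : P y -> y = p by move=> Py; apply: P_eq; rewrite // -ap a0 !dot0l.
exists (const_mx 1), (dot (const_mx 1) p); split.
- apply/eqP => /matrixP /(_ 0 (Ordinal n_gt0)); rewrite !mxE; apply/eqP/oner_neq0.
- by move=> y /P_p ->.
- by move=> y; split=> [->|[/P_p]//]; split=> //; exact: conv_mem.
Qed.

Lemma vertex_exists u c : (0 < n)%N -> (forall y, P y -> dot u y <= c) ->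
  (exists2 x, P x & dot u x = c) -> exists2 v, vertex P v & dot u v = c.
Proof.
move=> n_gt0 Hle [x Px ux].
have [q Oq uq] := conv_tight (J := predT) (u := fun _ : unit => u) (c := fun=> c)
  (fun _ q _ Oq => Hle q (conv_mem Oq)) Px (fun _ _ => ux).
have [p [Op up pmax]] := Worbit_argmax (Q := fun q => dot u q = c) (fun q => dot q q)
  (ex_intro2 _ _ q Oq (uq tt isT)).
have [T HT] := Worbit_finite.
pose off := [seq q <- T | `[< Orb q /\ dot u q < c >]].
have off_gap z : z \in off -> 0 < c - dot u z.
  by rewrite mem_filter => /andP[/asboolP[_]]; rewrite subr_gt0.
(* The orbit point p of maximal norm in the face is exposed by u + e p for
   small e > 0. *)
have [e e_gt0 He] := small_pos_scale (fun q => dot p q - dot p p) off_gap.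
exists p => //; apply: (unique_max_vertex (a := u + e *: p) (b := c + e * dot p p)) => //.
  by rewrite dotDl dotZl up.
move=> z Oz; rewrite dotDl dotZl.
have := Hle z (conv_mem Oz); rewrite le_eqVlt => /predU1P[uz|uz].
  have zp := pmax z Oz uz; rewrite uz; split; first by rewrite lerD2l ler_pM2l ?dot_le_self.
  by move=> /addrI /(mulfI (lt0r_neq0 e_gt0)); apply: dot_self_eq.
have := He z; rewrite mem_filter HT // andbT => /(_ (asboolT (conj Oz uz))).
rewrite mulrBr => ez; have ez_lt : dot u z + e * dot p z < c + e * dot p p by clear -ez; lra.
by split=> [|ez']; [exact: ltW | move: ez_lt; rewrite ez' ltxx].
Qed.

Lemma face_refl_sign u c a x : a \in Rt -> (forall y, P y -> dot u y <= c) ->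
  P x -> dot u x = c -> 0 <= dot x a * dot u a.
Proof.
move=> aR Hle Px ux; have aa_gt0 := dot_gt0 (root_neq0 aR).
have := Hle _ (conv_Worbit_refl aR Px); rewrite dot_reflr ux => h.
have : 0 <= 2 / dot a a * (dot x a * dot u a).
  by rewrite mulrA mulrAC; clear -h; lra.
by rewrite pmulr_rge0 // divr_gt0.
Qed.

Lemma face_dominant_point (I : finType) (A : {set I}) (u : I -> V) (c : I -> R)
    (K : {set 'I_n}) :
  (forall i y, i \in A -> P y -> dot (u i) y <= c i) ->
  (forall i k, i \in A -> k \in K -> 0 <= dot (u i) (alpha k)) ->
  (exists2 x, P x & forall i, i \in A -> dot (u i) x = c i) ->
  exists p, [/\ Orb p, forall i, i \in A -> dot (u i) p = c i & cone alpha K p].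
Proof.
move=> Hle Hpos [x Px Hx].
have [q Oq Gq] := conv_tight (fun i q iA Oq => Hle i q iA (conv_mem Oq)) Px Hx.
have [rho Hrho] := exists_rho.
have [p [Op Gp pmax]] := Worbit_argmax (Q := fun q => forall i, i \in A -> dot (u i) q = c i)
  (dot rho) (ex_intro2 _ _ q Oq Gq).
exists p; split=> // k kK; rewrite leNgt; apply/negP => pk_lt0.
have kk_gt0 := dot_gt0 (alpha_neq0 k).
set t := 2 * dot p (alpha k) / dot (alpha k) (alpha k).
have t_lt0 : t < 0 by rewrite /t pmulr_llt0 ?invr_gt0 // pmulr_rlt0.
have Ps : P (refl (alpha k) p) := conv_Worbit_refl (alpha_root k) (conv_mem Op).
have Gs i : i \in A -> dot (u i) (refl (alpha k) p) = c i.
  move=> iA; apply/eqP; rewrite eq_le Hle //=.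
  rewrite dot_reflr Gp // -/t lerDl oppr_ge0.
  exact: mulr_le0_ge0 (ltW t_lt0) (Hpos i k iA kK).
have := pmax _ (Worbit_refl (alpha_root k) Op) Gs.
by rewrite dot_reflr Hrho mulr1 -/t gerBl leNgt t_lt0.
Qed.

Definition alpha_span (B : {set 'I_n}) v :=
  exists t : 'I_n -> R, v = \sum_(k in B) t k *: alpha k.

Lemma alpha_span0 B : alpha_span B 0.
Proof. by exists (fun=> 0); rewrite big1 // => k _; rewrite scale0r. Qed.

Lemma alpha_spanD B v w : alpha_span B v -> alpha_span B w -> alpha_span B (v + w).
Proof.
move=> [t ->] [t' ->]; exists (fun k => t k + t' k).
by rewrite -big_split; apply: eq_bigr => k _; rewrite scalerDl.
Qed.

Lemma alpha_spanZ B c v : alpha_span B v -> alpha_span B (c *: v).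
Proof.
move=> [t ->]; exists (fun k => c * t k).
by rewrite scaler_sumr; apply: eq_bigr => k _; rewrite scalerA.
Qed.

Lemma alpha_span_alpha (B : {set 'I_n}) k : k \in B -> alpha_span B (alpha k).
Proof.
move=> kB; exists (fun j => (j == k)%:R).
rewrite (bigD1 k) //= eqxx scale1r big1 ?addr0 // => j /andP[_ /negbTE ->].
by rewrite scale0r.
Qed.

Lemma parabolic_orbit (B : {set 'I_n}) p : Orb p -> exists O : seq V,
  [/\ uniq O, p \in O, forall q, q \in O -> Orb q /\ alpha_span B (q - p)
    & forall k, k \in B -> perm_eq [seq refl (alpha k) q | q <- O] O].
Proof.
move=> Op.
pose reach q := exists2 l : seq 'I_n, all (mem B) l &
  q = foldr (fun k => refl (alpha k)) p l.
have reach_refl k q : k \in B -> reach q -> reach (refl (alpha k) q).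
  by move=> kB [l lB ->]; exists (k :: l); rewrite /= ?kB.
have reach_Orb q : reach q -> Orb q.
  by move=> [l _ ->]; elim: l => //= k l; apply: Worbit_refl (alpha_root k).
have reach_span q : reach q -> alpha_span B (q - p).
  move=> [l]; elim: l q => [|k l IH] q /=; first by move=> _ ->; rewrite subrr; exact: alpha_span0.
  case/andP => kB lB ->; rewrite /refl addrAC -scaleNr.
  exact: alpha_spanD (IH _ lB erefl) (alpha_spanZ _ (alpha_span_alpha kB)).
have [T HT] := Worbit_finite.
pose O := [seq q <- undup T | `[< reach q >]].
have memO q : q \in O <-> reach q.
  rewrite mem_filter mem_undup; split=> [/andP[/asboolP]//|rq].
  by apply/andP; split; [apply/asboolP | apply/HT/reach_Orb].
have O_uniq : uniq O by rewrite filter_uniq ?undup_uniq.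
exists O; split=> // [|q /memO rq|k kB]; first by apply/memO; exists [::].
  by split; [apply: reach_Orb | apply: reach_span].
have sK := reflK (alpha_neq0 k).
apply: uniq_perm; rewrite ?(map_inj_uniq (can_inj sK)) //.
move=> q; apply/mapP/idP => [[q' /memO rq' ->]|/memO rq].
  exact/memO/reach_refl.
by exists (refl (alpha k) q); [apply/memO/reach_refl | rewrite sK].
Qed.

(* The reflections s_k, k in B, permute the W_B-orbit of p, so they fix its
   barycenter. *)
Lemma parabolic_average (B : {set 'I_n}) p : Orb p ->
  exists2 x, P x & alpha_span B (x - p) /\ forall k, k \in B -> dot x (alpha k) = 0.
Proof.
move=> /(parabolic_orbit B) [O [O_uniq pO HO O_perm]].
have sum_orth k : k \in B -> dot (\sum_(q <- O) q) (alpha k) = 0.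
  move=> kB; have sum_opp : \sum_(q <- O) dot q (alpha k) = - \sum_(q <- O) dot q (alpha k).
    rewrite -{1}(perm_big _ (O_perm k kB)) big_map -sumrN.
    by apply: eq_bigr => q _; rewrite dot_refl_self ?alpha_neq0.
  by rewrite dot_suml; clear -sum_opp; lra.
have O_neq0 : O != [::] by apply: contraTneq pO => ->.
exists ((size O)%:R^-1 *: \sum_(q <- O) q).
  by apply: conv_avg => // q /HO[].
split=> [|k kB]; last by rewrite dotZl sum_orth // mulr0.
have -> : (size O)%:R^-1 *: \sum_(q <- O) q - p = (size O)%:R^-1 *: \sum_(q <- O) (q - p).
  rewrite sumrB big_const_seq count_predT iter_addr_0 scalerBr -scaler_nat scalerA.
  by rewrite mulVf ?pnatr_eq0 ?size_eq0 // scale1r.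
apply: alpha_spanZ; rewrite big_seq; apply: big_ind => [||q /HO[]//].
  exact: alpha_span0.
exact: alpha_spanD.
Qed.

Lemma face_meets_cone_walls (I : finType) (A : {set I}) (u : I -> V) (c : I -> R)
    (K B : {set 'I_n}) :
  B \subset K ->
  (forall i y, i \in A -> P y -> dot (u i) y <= c i) ->
  (forall i k, i \in A -> k \in K -> 0 <= dot (u i) (alpha k)) ->
  (forall i k, i \in A -> k \in B -> dot (u i) (alpha k) = 0) ->
  (exists2 x, P x & forall i, i \in A -> dot (u i) x = c i) ->
  exists x, [/\ P x, forall i, i \in A -> dot (u i) x = c i, cone alpha K x
              & forall k, k \in B -> wall alpha k x].
Proof.
move=> BK Hle Hpos Horth Hx.
have [p [Op Gp pK]] := face_dominant_point Hle Hpos Hx.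
have [x Px [[t xpE] xB]] := parabolic_average B Op.
have t_le0 : forall k, k \in B -> t k <= 0.
  apply: alpha_coef_le0 => k kB; rewrite -xpE dotBl xB // sub0r oppr_le0.
  exact/pK/(subsetP BK).
exists x; split=> // [i iA|k kK].
  rewrite -(subrK p x) dotDr xpE dot_sumr Gp // big1 ?add0r // => k kB.
  by rewrite dotZr Horth ?mulr0.
have [kB|kNB] := boolP (k \in B); first by rewrite xB.
rewrite -(subrK p x) dotDl xpE dot_suml addr_ge0 ?pK //.
apply: sumr_ge0 => j jB; rewrite dotZl mulr_le0 ?t_le0 ?alpha_obtuse //.
by apply: contraNneq kNB => <-.
Qed.

Hypothesis Lam_dominant : forall lam, lam \in Lam -> cone alpha setT lam.
Hypothesis P_nondeg : nondeg_polytope alpha P.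

Lemma dominant_vertex_dot_root_neq0 lam (b : V) :
  lam \in Lam -> vertex P lam -> b \in Rt -> dot lam b != 0.
Proof.
move=> lamL vlam bR; apply/eqP => lam_b.
have [c [c_ge0 bE]] := root_coef_sign bR.
have lam_ge0 k : 0 <= dot lam (alpha k) by apply: Lam_dominant; rewrite ?inE.
have sum0 : \sum_k c k * dot lam (alpha k) = 0.
  have : dot lam (\sum_k c k *: alpha k) = 0.
    by case: bE lam_b => -> //; rewrite -scaleN1r dotZr mulN1r => /eqP; rewrite oppr_eq0 => /eqP.
  by rewrite dot_sumr; under eq_bigr do rewrite dotZr.
have [k ck] : exists k, c k != 0.
  move: (root_neq0 bR); apply: contraNP => /forallNP c0; apply/eqP.
  case: bE => ->; rewrite big1 ?oppr0 // => k _; move/negP/negbNE/eqP: (c0 k) => ->;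
    exact: scale0r.
apply: (P_nondeg vlam); split; first exact: Lam_dominant.
exists k; move: sum0 => /(psumr_eq0P (fun j _ => mulr_ge0 (c_ge0 j) (lam_ge0 j))).
by move=> /(_ k isT) /eqP; rewrite mulf_eq0 (negbTE ck) => /eqP.
Qed.

Lemma vertex_dot_root_neq0 v (b : V) : vertex P v -> b \in Rt -> dot v b != 0.
Proof.
move=> vv; have [l [lam [lR lamL vE]]] := vertex_Worbit vv; subst v.
elim: l vv lR b => [|a l IH] /= vv; first by move=> _ b; apply: dominant_vertex_dot_root_neq0.
case/andP => aR lR b bR; rewrite dot_reflC; apply: IH (refl_root_mem aR bR) => //.
by rewrite -[foldr _ _ _](reflK (root_neq0 aR)); apply: vertex_refl.
Qed.

Lemma face_normal_ge0 (F : V -> Prop) u c k :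
  (forall y, P y -> dot u y <= c) -> (forall y, F y <-> P y /\ dot u y = c) ->
  (exists x, F x) -> (exists b, barycenter P F b /\ 0 <= dot b (alpha k)) ->
  0 <= dot u (alpha k).
Proof.
move=> Hle HF [x /HF[Px ux]] [_ [[s [s_uniq Hs ->]] bk]].
have n_gt0 : (0 < n)%N by apply: leq_ltn_trans (ltn_ord k).
rewrite leNgt; apply/negP => uk_lt0.
have [v vv uv] := vertex_exists n_gt0 Hle (ex_intro2 _ _ x Px ux).
have vs : v \in s by apply/Hs; split=> //; apply/HF; split=> //; exact: vertex_conv.
have s_lt0 y : y \in s -> dot y (alpha k) < 0.
  case/Hs => yv /HF[Py uy]; rewrite lt_neqAle vertex_dot_root_neq0 ?alpha_root //=.
  by rewrite -(nmulr_lge0 _ uk_lt0) (face_refl_sign (alpha_root k) Hle Py uy).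
have : \sum_(y <- s | y != v) dot y (alpha k) <= 0.
  by rewrite big_seq_cond; apply: sumr_le0 => y /andP[/s_lt0/ltW].
move: bk; rewrite dotZl dot_suml (bigD1_seq v) //= pmulr_rge0; last first.
  by rewrite invr_gt0 ltr0n; case: (s) vs.
by have := s_lt0 v vs; lra.
Qed.

Lemma face_normal_orth_wall u c z k : (forall y, P y -> dot u y <= c) ->
  P z -> dot u z = c -> dot z (alpha k) = 0 -> dot u (alpha k) = 0.
Proof.
move=> Hle Pz uz zk; apply/eqP; apply: contraT => uk_neq0.
have n_gt0 : (0 < n)%N by apply: leq_ltn_trans (ltn_ord k).
have sk := alpha_root k.
(* u + s_k u attains its maximum 2c at z; at a vertex where it does so both u
   and u o s_k are maximal, which forces the vertex onto H_k. *)
have Hle2 y : P y -> dot (u + refl (alpha k) u) y <= c + c.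
  by move=> Py; rewrite dotDl dot_reflC lerD // Hle //; apply: conv_Worbit_refl.
have uz2 : dot (u + refl (alpha k) u) z = c + c.
  by rewrite dotDl dot_reflC refl_id // uz.
have [v vv uv] := vertex_exists n_gt0 Hle2 (ex_intro2 _ _ z Pz uz2).
have Pv := vertex_conv vv; have := Hle _ Pv; have := Hle _ (conv_Worbit_refl sk Pv).
move: uv; rewrite dotDl dot_reflC => uv h1 h2.
have uv_c : dot u v = c by lra.
have : dot u (refl (alpha k) v) = c by lra.
rewrite dot_reflr uv_c => h.
have /eqP : 2 * dot v (alpha k) / dot (alpha k) (alpha k) * dot u (alpha k) = 0 by lra.
rewrite !mulf_eq0 invr_eq0 dot_eq0 pnatr_eq0 (negbTE uk_neq0) (negbTE (alpha_neq0 k)).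
by rewrite (negbTE (vertex_dot_root_neq0 vv sk)).
Qed.

Lemma facets_K_normal (K : {set 'I_n}) (F : V -> Prop) : facets_K alpha P K F ->
  exists uc : V * R, [/\ forall y, P y -> dot uc.1 y <= uc.2,
    forall y, F y <-> P y /\ dot uc.1 y = uc.2,
    forall k, k \in K -> 0 <= dot uc.1 (alpha k)
  & forall k, (exists2 z, F z & wall alpha k z) -> dot uc.1 (alpha k) = 0].
Proof.
move=> [[[u [c [_ Hle HF]]] [x [_ [Fx _ _]]]] [b [bF bK]]].
exists (u, c); split=> //= [k kK|k [z /HF[Pz uz] zk]].
  by apply: face_normal_ge0 Hle HF _ _; [exists x | exists b; split=> //; apply: bK].
exact: face_normal_orth_wall Hle Pz uz zk.
Qed.

Lemma facets_K_meet_cone_walls (K B : {set 'I_n}) (I : finType) (A : {set I})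
    (G : I -> V -> Prop) :
  B \subset K -> (forall i, facets_K alpha P K (G i)) ->
  (forall i k, i \in A -> k \in B -> exists2 z, G i z & wall alpha k z) ->
  (exists x, P x) -> (exists x, forall i, i \in A -> G i x) ->
  exists x, [/\ P x, cone alpha K x, forall i, i \in A -> G i x
              & forall k, k \in B -> wall alpha k x].
Proof.
move=> BK HG Gwall [x0 Px0] [x Gx].
have [uc Huc] := choice (fun i => facets_K_normal (HG i)).
have HGi i y : G i y <-> P y /\ dot (uc i).1 y = (uc i).2 by case: (Huc i).
have Hle i y : i \in A -> P y -> dot (uc i).1 y <= (uc i).2.
  by move=> _; case: (Huc i) => + _ _ _; apply.
have Hpos i k : i \in A -> k \in K -> 0 <= dot (uc i).1 (alpha k).
  by move=> _; case: (Huc i) => _ _ + _; apply.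
have Horth i k : i \in A -> k \in B -> dot (uc i).1 (alpha k) = 0.
  by move=> iA kB; case: (Huc i) => _ _ _; apply; apply: Gwall.
have Gface : exists2 x, P x & forall i, i \in A -> dot (uc i).1 x = (uc i).2.
  have [A0|[i0 i0A]] := set_0Vmem A; first by exists x0 => // i; rewrite A0 inE.
  by exists x => [|i iA]; [have [] := (HGi i0 x).1 (Gx i0 i0A) | have [] := (HGi i x).1 (Gx i iA)].
have [y [Py Gy Ky By]] := face_meets_cone_walls BK Hle Hpos Horth Gface.
by exists y; split=> // i iA; apply/HGi; split; last exact: Gy.
Qed.

End RootSystem.

Section GeneratedIdeal.
Variable T : comNzRingType.
Implicit Type G : T -> Prop.

Lemma gen_ideal0 G : gen_ideal G 0.
Proof. by exists [::]; rewrite big_nil. Qed.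

Lemma gen_idealD G p q : gen_ideal G p -> gen_ideal G q -> gen_ideal G (p + q).
Proof.
move=> [s [sG ->]] [s' [s'G ->]]; exists (s ++ s'); rewrite big_cat.
by split=> // c; rewrite mem_cat => /orP[/sG|/s'G].
Qed.

Lemma gen_idealMl G a p : gen_ideal G p -> gen_ideal G (a * p).
Proof.
move=> [s [sG ->]]; exists [seq (a * c.1, c.2) | c <- s].
split; first by move=> d /mapP[c cs ->]; exact: sG cs.
by rewrite mulr_sumr big_map; apply: eq_bigr => c _; rewrite mulrA.
Qed.

Lemma gen_ideal_gen G g : G g -> gen_ideal G g.
Proof. by exists [:: (1, g)]; rewrite big_seq1 mul1r; split=> // c /[!inE] /eqP ->. Qed.

Lemma gen_ideal_sub G G' p :
  (forall g, G g -> gen_ideal G' g) -> gen_ideal G p -> gen_ideal G' p.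
Proof.
move=> GG' [s [sG ->]]; elim: s sG => [|c s IH] sG; first by rewrite big_nil; exact: gen_ideal0.
rewrite big_cons; apply: gen_idealD (gen_idealMl _ (GG' _ (sG _ (mem_head _ _)))) (IH _).
by move=> d ds; apply: sG; rewrite inE ds orbT.
Qed.

End GeneratedIdeal.

Theorem lemma2p10
  (R : realType) (n : nat) (Rt : seq 'rV[R]_n) (alpha : 'I_n -> 'rV[R]_n)
  (Lam : seq 'rV[R]_n) (K : {set 'I_n}) (F : fieldType)
  (m q : nat) (fac : 'I_m -> 'rV[R]_n -> Prop) (kap : 'I_q -> 'I_n) :
  reduced_root_system Rt ->
  simple_system Rt alpha ->
  (forall lam, lam \in Lam -> cone alpha setT lam) ->
  let P := conv (Worbit Rt Lam) in
  full_dimensional P ->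
  nondeg_polytope alpha P ->
  (* fac enumerates \mathcal F_K without repetition *)
  (forall i, facets_K alpha P K (fac i)) ->
  (forall G, facets_K alpha P K G -> exists i, forall x, G x <-> fac i x) ->
  (forall i j, (forall x, fac i x <-> fac j x) -> i = j) ->
  (* kap enumerates K without repetition *)
  (forall j, kap j \in K) ->
  (forall k, k \in K -> exists j, kap j = k) ->
  injective kap ->
  let X (i : 'I_m) : {mpoly F[m + q]} := 'X_(lshift q i) in
  let Y (j : 'I_q) : {mpoly F[m + q]} := 'X_(rshift m j) in
  (* generators of I_K: monomials of facets of P /\ C_K with empty intersection *)
  let SRgen (p : {mpoly F[m + q]}) :=
    exists (A : {set 'I_m}) (B : {set 'I_q}),
      p = (\prod_(i in A) X i) * (\prod_(j in B) Y j) /\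
      ~ (exists x, (forall i, i \in A -> fac i x /\ cone alpha K x) /\
                   (forall j, j \in B -> wall alpha (kap j) x /\ P x)) in
  (* type (i) *)
  let gen1 (p : {mpoly F[m + q]}) :=
    exists A : {set 'I_m},
      p = \prod_(i in A) X i /\ ~ (exists x, forall i, i \in A -> fac i x) in
  (* type (ii) *)
  let gen2 (p : {mpoly F[m + q]}) :=
    exists (i : 'I_m) (j : 'I_q),
      p = X i * Y j /\ ~ (exists x, fac i x /\ wall alpha (kap j) x) in
  forall p : {mpoly F[m + q]},
    gen_ideal SRgen p <-> gen_ideal (fun g => gen1 g \/ gen2 g) p.
Proof.
move=> HR HS HL P Hfull Hnd HfacK _ _ HkapK _ _ X Y SRgen gen1 gen2 p.
have [x0 [_ [Px0 _ _]]] := Hfull.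
split; apply: gen_ideal_sub => g.
- move=> [A [B [-> Hempty]]].
  have [[i [j [iA jB Hij]]]|Hwalls] :=
    EM (exists i j, [/\ i \in A, j \in B & ~ exists x, fac i x /\ wall alpha (kap j) x]).
    rewrite (bigD1 i iA) (bigD1 j jB) /= mulrACA mulrC.
    by apply/gen_idealMl/gen_ideal_gen; right; exists i, j.
  have [Ameet|Aempty] := EM (exists x, forall i, i \in A -> fac i x); last first.
    by rewrite mulrC; apply/gen_idealMl/gen_ideal_gen; left; exists A.
  exfalso; apply: Hempty.
  have BK : kap @: B \subset K by apply/subsetP => _ /imsetP[j _ ->]; apply: HkapK.
  have Gwall i k : i \in A -> k \in kap @: B -> exists2 z, fac i z & wall alpha k z.
    move=> iA /imsetP[j jB ->]; have [//|Hno] := EM (exists2 z, fac i z & wall alpha (kap j) z).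
    by case: Hwalls; exists i, j; split=> // -[z [fz wz]]; apply: Hno; exists z.
  have [y [Py Ky Ay By]] :=
    facets_K_meet_cone_walls HR HS HL Hnd BK HfacK Gwall (ex_intro _ x0 Px0) Ameet.
  by exists y; split=> [i iA|j jB]; split=> //; [exact: Ay | apply/By/imset_f].
- move=> [[A [-> HA]]|[i [j [-> Hij]]]].
    apply: gen_ideal_gen; exists A, set0; rewrite big_set0 mulr1; split=> // -[x [Ax _]].
    by apply: HA; exists x => i /Ax[].
  apply: gen_ideal_gen; exists [set i], [set j]; rewrite !big_set1; split=> // -[x [Ax Bx]].
  by apply: Hij; exists x; split; [case: (Ax i (set11 i)) | case: (Bx j (set11 j))].
Qed.
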